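(* Let $A=\{a_1^{k_1},\ldots,a_n^{k_n}\}$, $m\ge0$, $r=\max(k_1,\ldots,k_n)$, $s=\min(m,r)$, and let $\Lambda_m(A)$ be the set of tuples $(\lambda_1,\ldots,\lambda_s)$ of non-negative integers with $\sum_{i=1}^s i\lambda_i=m$ and $\sum_{i=j}^s\lambda_i\le\overline{k_j}$ for $j=1,\ldots,s$. Then the number of $m$-permutations of $A$ is $$|P_m(A)|=\sum_{\lambda\in\Lambda_m(A)}\frac{m!}{(1!)^{\lambda_1}(2!)^{\lambda_2}\cdots(s!)^{\lambda_s}}\prod_{j=1}^s\binom{\overline{k_j}-\sum_{i=j+1}^s\lambda_i}{\lambda_j}.$$
   Context: A multiset $A=\{a_1^{k_1},\ldots,a_n^{k_n}\}$ consists of distinct elements $a_1,\ldots,a_n$ with positive integer multiplicities $k_1,\ldots,k_n$. $P_m(A)$, the set of $m$-permutations of $A$, is the set of all sequences (words) of length $m$ over $\{a_1,\ldots,a_n\}$ in which each $a_i$ occurs at most $k_i$ times. For each integer $j\ge1$, $\overline{k_j}=|\{i\in\{1,\ldots,n\}: k_i\ge j\}|$. *)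

From mathcomp Require Import all_boot all_order all_algebra.
Set Implicit Arguments. Unset Strict Implicit. Unset Printing Implicit Defensive.

(* A multiset A = {a_1^{k_1},...,a_n^{k_n}} is modelled by its elements 'I_n
   (a_i is represented by i) and the multiplicity function k : 'I_n -> nat. *)

Definition mperms (n : nat) (k : 'I_n -> nat) (m : nat) : {set m.-tuple 'I_n} :=
  [set w : m.-tuple 'I_n | [forall i : 'I_n, count_mem i w <= k i]].

Definition kbar (n : nat) (k : 'I_n -> nat) (j : nat) : nat :=
  #|[set i : 'I_n | j <= k i]|.

Definition kmax (n : nat) (k : 'I_n -> nat) : nat := \max_(i : 'I_n) k i.

(* A tuple (lambda_1,...,lambda_s) is represented by l : {ffun 'I_s -> 'I_(m.+1)}
   (entries automatically bounded by m, which any element of Lambda_m(A)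
   satisfies since sum_i i*lambda_i = m); lam l i = lambda_i for 1 <= i <= s,
   and 0 otherwise. *)
Definition lam (s m : nat) (l : {ffun 'I_s -> 'I_m.+1}) (i : nat) : nat :=
  if 0 < i then
    (if @insub _ (fun x => x < s) _ i.-1 is Some j then val (l j) else 0)
  else 0.

Definition inLambda (n : nat) (k : 'I_n -> nat) (m s : nat)
    (l : {ffun 'I_s -> 'I_m.+1}) : bool :=
  (\sum_(1 <= i < s.+1) i * lam l i == m) &&
  [forall j : 'I_s, \sum_(j.+1 <= i < s.+1) lam l i <= kbar k j.+1].

From mathcomp Require Import all_boot all_order all_algebra.
From mathcomp Require Import zify.
Import GRing.Theory Num.Theory.
Set Implicit Arguments. Unset Strict Implicit. Unset Printing Implicit Defensive.

(* A word over 'I_n has a content c (c i = number of occurrences of i); it is an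
   m-permutation of A exactly when c is admissible: c <= k pointwise and sum c = m.
   1. |P_m(A)| is the sum over admissible contents c of the number N(c) of words
      of content c, and N(c) * prod_i (c i)! = m! (multinomial count).
   2. An admissible content takes values <= s = min(m, max k); its profile is
      lambda_v = #{i | c i = v}, 1 <= v <= s.  Then sum_v v lambda_v = sum_i c i,
      prod_v (v!)^lambda_v = prod_i (c i)!, and sum_(v >= j) lambda_v = #{i | c i >= j}
      <= kbar_j, so the admissible contents are exactly the contents whose profile
      lies in Lambda_m(A).
   3. The contents c <= k with a prescribed profile lambda are counted by choosing
      their level sets from level s downwards: level j is a lambda_j-subset of the
      indices with k i >= j not used by higher levels, which gives
      prod_j C(kbar_j - sum_(i > j) lambda_i, lambda_j).
   The theorem follows by regrouping the sum of step 1 according to profiles. *)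

Section Words.
Variable n : nat.

Lemma sum_count_mem (w : seq 'I_n) : \sum_i count_mem i w = size w.
Proof.
elim: w => [|x w IH] /=; first by rewrite big1.
rewrite big_split /= IH (bigD1 x) //= eqxx big1 ?addn0 ?add1n // => i /negPf.
by rewrite eq_sym => ->.
Qed.

Lemma card_tuple_cons m (P : pred (m.+1.-tuple 'I_n)) :
  #|[set w | P w]| = \sum_(x : 'I_n) #|[set t : m.-tuple 'I_n | P [tuple of x :: t]]|.
Proof.
rewrite -sum1_card.
rewrite (reindex (fun p : 'I_n * m.-tuple 'I_n => [tuple of p.1 :: p.2])) /=; last first.
  exists (fun w => (thead w, [tuple of behead w])) => [[x t]|w] _ /=.
    by congr pair; apply: val_inj.
  by rewrite [RHS](tuple_eta w); apply: val_inj.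
rewrite (eq_bigr (fun x => \sum_(t : m.-tuple 'I_n | P [tuple of x :: t]) 1)); last first.
  by move=> x _; rewrite -sum1_card; apply: eq_bigl => t; rewrite inE.
rewrite (pair_big_dep xpredT (fun x (t : m.-tuple 'I_n) => P [tuple of x :: t])) /=.
by apply: eq_bigl => p; rewrite inE.
Qed.

Definition content_class m (c : 'I_n -> nat) : {set m.-tuple 'I_n} :=
  [set w : m.-tuple 'I_n | [forall i, count_mem i w == c i]].

Lemma content_class_cons m (c : 'I_n -> nat) x : 0 < c x ->
  [set t : m.-tuple 'I_n | [forall i, count_mem i [tuple of x :: t] == c i]] =
  content_class m (fun i => c i - (x == i)).
Proof.
move=> cx_gt0; apply/setP => t; rewrite !inE; apply: eq_forallb => i /=.
by case: (x =P i) => [<-|_] /=; apply/eqP/eqP; lia.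
Qed.

Lemma multinomial_content m (c : 'I_n -> nat) : \sum_i c i = m ->
  #|content_class m c| * \prod_i (c i)`! = m`!.
Proof.
elim: m c => [|m IH] c sum_c.
  have c0 i : c i = 0 by apply/eqP; rewrite -leqn0 -sum_c (bigD1 i) ?leq_addr.
  rewrite big1 ?muln1 => [|i _]; last by rewrite c0.
  rewrite (_ : content_class 0 c = setT) ?cardsT ?card_tuple //.
  by apply/setP => w; rewrite !inE tuple0; apply/forallP => i; rewrite c0.
rewrite card_tuple_cons big_distrl /= factS -sum_c big_distrl /=.
apply: eq_bigr => x _.
have [cx0|cx_gt0] := posnP (c x).
  rewrite cx0 mul0n (_ : [set _ | _] = set0) ?cards0 //.
  apply/setP => t; rewrite !inE; apply/negbTE/negP => /forallP /(_ x) /eqP.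
  by rewrite /= eqxx cx0.
rewrite (content_class_cons _ cx_gt0).
pose c' i := c i - (x == i).
have c'E i : i != x -> c' i = c i by rewrite /c' eq_sym => /negPf ->; rewrite subn0.
have sum_c' : \sum_i c' i = m.
  apply: succn_inj; rewrite -sum_c [RHS](bigD1 x) //= (bigD1 x) //= (eq_bigr _ c'E).
  by rewrite /c' eqxx; case: (c x) cx_gt0 => // y _; rewrite subn1 addSn.
rewrite -(IH c' sum_c') (bigD1 x) //= [\prod_i (c' i)`!](bigD1 x) //=.
rewrite (eq_bigr _ (fun i ni => congr1 factorial (c'E i ni))) /c' eqxx.
set N := #|_|; set P := \prod_(i < n | i != x) _.
by case: (c x) cx_gt0 => // y _; rewrite factS subn1 /=; lia.
Qed.

End Words.

Definition admissible n (k : 'I_n -> nat) m (c : {ffun 'I_n -> 'I_m.+1}) : bool :=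
  [forall i, c i <= k i] && (\sum_i c i == m).

Lemma card_mperms_content n (k : 'I_n -> nat) m :
  #|mperms k m| = \sum_(c : {ffun 'I_n -> 'I_m.+1} | admissible k c)
                    #|content_class m (fun i => c i : nat)|.
Proof.
have count_lt w i : count_mem i (w : m.-tuple 'I_n) < m.+1.
  by rewrite ltnS -{2}(size_tuple w) count_size.
pose content (w : m.-tuple 'I_n) : {ffun 'I_n -> 'I_m.+1} := [ffun i => inord (count_mem i w)].
have contentE w i : content w i = count_mem i w :> nat by rewrite ffunE inordK.
rewrite -sum1_card (partition_big content
   (fun c : {ffun 'I_n -> 'I_m.+1} => [forall i, c i <= k i] && (\sum_i c i == m))).
  apply: eq_bigr => c /andP[/forallP ck _].
  rewrite -sum1_card; apply: eq_bigl => w; rewrite !inE.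
  apply/andP/forallP => [[_ /eqP <-] i|h]; first by rewrite contentE.
  have -> : content w = c by apply/ffunP => i; apply: ord_inj; rewrite contentE (eqP (h i)).
  by split=> //; apply/forallP => i; rewrite (eqP (h i)) ck.
move=> w; rewrite inE => /forallP hw; apply/andP; split.
  by apply/forallP => i; rewrite contentE.
by rewrite (eq_bigr _ (fun i _ => contentE w i)) sum_count_mem size_tuple.
Qed.
Section Grading.
Variables (n : nat) (k : 'I_n -> nat) (M : nat) (L : nat -> nat).
Implicit Types (c : {ffun 'I_n -> 'I_M.+1}) (U S : {set 'I_n}).

Definition level c (j : nat) : {set 'I_n} := [set i | c i == j :> nat].

Definition graded (t : nat) U : {set {ffun 'I_n -> 'I_M.+1}} :=
  [set c : {ffun 'I_n -> 'I_M.+1} | [&& [forall i, (i \in U) ==> (c i == 0 :> nat)],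
              [forall i, c i <= t], [forall i, c i <= k i] &
              [forall j : 'I_t, #|level c j.+1| == L j.+1]]].

Lemma gradedP t U c : reflect
  [/\ forall i, i \in U -> c i = 0 :> nat, forall i, c i <= t, forall i, c i <= k i &
     forall j, j < t -> #|level c j.+1| = L j.+1] (c \in graded t U).
Proof.
rewrite inE; apply: (iffP and4P) => [[/forallP cU /forallP ct /forallP ck /forallP cL]|].
  split=> //; first by move=> i iU; apply/eqP/(implyP (cU i) iU).
  by move=> j jt; apply/eqP/(cL (Ordinal jt)).
case=> cU ct ck cL; split; apply/forallP => //.
  by move=> i; apply/implyP => /cU ->.
by move=> j; rewrite cL.
Qed.

Lemma graded0 U : graded 0 U = [set [ffun=> ord0]].
Proof.
apply/setP => c; rewrite !inE; apply/idP/idP.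
  case/and4P=> _ /forallP c0 _ _; apply/eqP/ffunP => i; rewrite ffunE.
  by apply: val_inj => /=; move: (c0 i); rewrite leqn0 => /eqP.
move/eqP->; apply/and4P; split; apply/forallP => i; rewrite ?ffunE ?implybT //.
by case: i.
Qed.

(* Fixing the top level set S, the remaining values form a graded function of
   height t that also vanishes on S: reset S to 0, and conversely raise it to t+1. *)
Lemma card_graded_top t U S : t < M -> S \subset [set i | t < k i] :\: U ->
    #|S| = L t.+1 ->
  #|[set c in graded t.+1 U | level c t.+1 == S]| = #|graded t (U :|: S)|.
Proof.
move=> tM sSX cardS.
have SX i : i \in S -> (i \notin U) && (t < k i).
  by move=> iS; move/subsetP: sSX => /(_ i iS); rewrite !inE.
pose lower c : {ffun 'I_n -> 'I_M.+1} := [ffun i => if i \in S then ord0 else c i].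
pose raise c : {ffun 'I_n -> 'I_M.+1} :=
  [ffun i => if i \in S then (inord t.+1 : 'I_M.+1) else c i].
have top c : level c t.+1 = S -> forall i, i \in S -> c i = t.+1 :> nat.
  by move=> <- i; rewrite inE => /eqP.
rewrite -(card_in_imset (f := lower)) => [|c1 c2]; last first.
  rewrite !inE => /andP[_ /eqP e1] /andP[_ /eqP e2] /ffunP e.
  apply/ffunP => i; move: (e i); rewrite !ffunE; case: ifP => iS // _.
  by apply: ord_inj; rewrite (top _ e1) // (top _ e2).
apply: eq_card => c'; apply/imsetP/idP.
  case=> c; rewrite inE => /andP[/gradedP[cU ct ck cL] /eqP levS] ->.
  have below i : i \notin S -> c i != t.+1 :> nat by rewrite -levS inE.
  apply/gradedP; split=> [i|i|i|j jt]; rewrite ?ffunE.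
  - by rewrite inE => /orP[/cU|->] //; case: ifP.
  - by case: ifP => // /negbT /below ne; rewrite -ltnS ltn_neqAle ne ct.
  - by case: ifP => // _; apply: ck.
  - rewrite -(cL j (ltnW jt)); apply: eq_card => i; rewrite !inE ffunE.
    by case: ifP => // iS; rewrite (top _ levS) //= eqSS (gtn_eqF jt).
case/gradedP => cU ct ck cL.
have c'S i : i \in S -> c' i = 0 :> nat by move=> iS; apply: cU; rewrite inE iS orbT.
have raiseE i : raise c' i = (if i \in S then t.+1 else c' i) :> nat.
  by rewrite ffunE; case: ifP; rewrite ?inordK.
have levraise : level (raise c') t.+1 = S.
  apply/setP => i; rewrite inE raiseE; case: ifP => _; first by rewrite eqxx.
  by rewrite ltn_eqF // ltnS ct.
exists (raise c'); last first.
  apply/ffunP => i; rewrite !ffunE; case: ifP => iS; last by rewrite iS.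
  by apply: ord_inj; rewrite /= c'S.
rewrite inE levraise eqxx andbT; apply/gradedP; split=> [i iU|i|i|j].
- by rewrite raiseE; case: ifPn => [/SX|iS]; [rewrite iU | apply: cU; rewrite inE iU].
- by rewrite raiseE; case: ifP => // _; apply: leqW.
- by rewrite raiseE; case: ifP => [/SX/andP[]|_].
- rewrite ltnS leq_eqVlt => /orP[/eqP ->|jt]; first by rewrite levraise cardS.
  rewrite -(cL j jt); apply: eq_card => i; rewrite !inE raiseE.
  by case: ifP => // iS; rewrite c'S // eqSS (gtn_eqF jt).
Qed.

Lemma card_graded_step t U : t < M ->
  #|graded t.+1 U| = \sum_(S : {set 'I_n} |
      (S \subset [set i | t < k i] :\: U) && (#|S| == L t.+1)) #|graded t (U :|: S)|.
Proof.
move=> tM; rewrite -sum1_card (partition_big (level^~ t.+1)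
   (fun S => (S \subset [set i | t < k i] :\: U) && (#|S| == L t.+1))) => [|c].
  apply: eq_bigr => S /andP[sSX /eqP cardS]; rewrite -card_graded_top //.
  by rewrite -sum1_card; apply: eq_bigl => c; rewrite inE.
case/gradedP => cU _ ck cL; rewrite cL // eqxx andbT.
apply/subsetP => i; rewrite !inE => /eqP ci; rewrite -ci ck andbT.
by apply/negP => /cU; rewrite ci.
Qed.

(* Counting graded functions: choose the level sets from the top down, level j
   among the kbar j indices with k i >= j not yet used (by U or higher levels). *)
Lemma card_graded t U : t <= M -> U \subset [set i | t < k i] ->
  #|graded t U| = \prod_(1 <= j < t.+1)
      'C(kbar k j - #|U| - \sum_(j.+1 <= i < t.+1) L i, L j).
Proof.
elim: t U => [|t IH] U tM sU; first by rewrite graded0 cards1 big_geq.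
have sU' : U \subset [set i | t < k i].
  by apply/subsetP => i /(subsetP sU); rewrite !inE => /ltnW.
pose X := [set i | t < k i] :\: U.
have cardUS S : S \subset X -> #|U :|: S| = #|U| + #|S|.
  move=> sSX; rewrite cardsU (_ : U :&: S = set0) ?cards0 ?subn0 //.
  apply/setP => i; rewrite !inE; apply/negbTE/negP => /andP[iU iS].
  by move/subsetP: sSX => /(_ i iS); rewrite !inE iU.
rewrite card_graded_step // [LHS](eq_bigr (fun _ => \prod_(1 <= j < t.+1)
      'C(kbar k j - (#|U| + L t.+1) - \sum_(j.+1 <= i < t.+1) L i, L j))); last first.
  move=> S /andP[sSX /eqP cS]; rewrite IH ?cardUS ?cS ?(ltnW tM) //.
  apply/subsetP => i; rewrite !inE => /orP[/(subsetP sU')|/(subsetP sSX)]; rewrite !inE //.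
  by case/andP.
rewrite sum_nat_const (_ : #|_| = 'C(#|X|, L t.+1)); last first.
  by rewrite -cards_draws; apply: eq_card => S; rewrite !inE.
rewrite [RHS]big_nat_recr //= (big_geq (leqnn t.+2)) subn0 /X cardsD (setIidPr sU').
rewrite mulnC; congr (_ * _); apply: eq_big_nat => j /andP[j1 jt].
by rewrite [in RHS]big_nat_recr //=; congr binomial; lia.
Qed.

End Grading.

Section Profiles.
Variables (n : nat) (k : 'I_n -> nat) (m s : nat).
Hypothesis le_content_s : forall i, minn m (k i) <= s.
Implicit Types (c : {ffun 'I_n -> 'I_m.+1}) (l : {ffun 'I_s -> 'I_m.+1}).

Definition profile c : {ffun 'I_s -> 'I_m.+1} :=
  [ffun j => inord #|level c (nat_of_ord j).+1|].

Definition has_profile l c : Prop := forall v, 0 < v <= s -> lam l v = #|level c v|.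

Definition with_profile l : {set {ffun 'I_n -> 'I_m.+1}} := graded k m (lam l) s set0.

Lemma lamE l (j : 'I_s) : lam l j.+1 = l j.
Proof. by rewrite /lam /=; case: insubP => [u _ /val_inj -> //|]; rewrite ltn_ord. Qed.

Lemma content_le_s c i : c i <= k i -> c i <= s.
Proof. by move=> cik; apply: leq_trans (le_content_s i); rewrite leq_min cik andbT -ltnS ltn_ord. Qed.

Lemma big_level (R : Type) (idx : R) (op : Monoid.com_law idx) c (F : nat -> R) :
    (forall i, c i <= s) ->
  \big[op/idx]_i F (c i) = \big[op/idx]_(0 <= v < s.+1) \big[op/idx]_(i in level c v) F v.
Proof.
move=> cs; rewrite (partition_big (fun i => inord (c i) : 'I_s.+1) xpredT) //=.
rewrite big_mkord; apply: eq_bigr => v _; apply: eq_big => [i|i /eqP <-].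
  by rewrite inE -(inj_eq val_inj) /= inordK // ltnS.
by rewrite inordK // ltnS.
Qed.

Lemma sum_level c (F : nat -> nat) : (forall i, c i <= s) ->
  \sum_i F (c i) = \sum_(0 <= v < s.+1) #|level c v| * F v.
Proof. by move=> cs; rewrite big_level //; apply: eq_bigr => v _; rewrite sum_nat_const. Qed.

Lemma prod_level c (F : nat -> nat) : (forall i, c i <= s) ->
  \prod_i F (c i) = \prod_(0 <= v < s.+1) F v ^ #|level c v|.
Proof. by move=> cs; rewrite big_level //; apply: eq_bigr => v _; rewrite prod_nat_const. Qed.

Lemma profile_weight l c : (forall i, c i <= s) -> has_profile l c ->
  \sum_(1 <= j < s.+1) j * lam l j = \sum_i c i.
Proof.
move=> cs cl; rewrite (sum_level id cs) [RHS]big_ltn //= muln0 add0n.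
by apply: eq_big_nat => v /andP[v1 vs]; rewrite cl ?v1 // mulnC.
Qed.

Lemma profile_fact l c : (forall i, c i <= s) -> has_profile l c ->
  \prod_(1 <= j < s.+1) (j`! ^ lam l j) = \prod_i (c i)`!.
Proof.
move=> cs cl; rewrite (prod_level factorial cs) [RHS]big_ltn //= fact0 exp1n mul1n.
by apply: eq_big_nat => v /andP[v1 vs]; rewrite cl ?v1.
Qed.

Lemma profile_tail l c j : (forall i, c i <= s) -> has_profile l c -> 0 < j <= s ->
  \sum_(j <= i < s.+1) lam l i = #|[set i | j <= c i]|.
Proof.
move=> cs cl /andP[j0 js].
rewrite -sum1_card [RHS]big_mkcond /= [RHS](eq_bigr (fun i => (j <= c i : nat))); last first.
  by move=> i _; rewrite inE; case: (j <= c i).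
rewrite (sum_level (fun v => (j <= v : nat)) cs) [RHS](big_cat_nat (n := j)) //=; last exact: ltnW.
rewrite [X in X + _]big1_seq ?add0n => [|v /andP[_]]; last first.
  by rewrite mem_index_iota => /andP[_ vj]; rewrite leqNgt vj muln0.
apply: eq_big_nat => v /andP[jv vs]; rewrite jv muln1 cl //.
by rewrite (leq_trans j0 jv) -ltnS vs.
Qed.

(* An admissible content has a well-defined profile (its levels have size <= m). *)
Lemma profileP c : admissible k c -> has_profile (profile c) c.
Proof.
case/andP => _ /eqP sum_c v /andP[v0 vs]; case: v v0 vs => // v _ vs.
rewrite (lamE _ (Ordinal vs)) ffunE inordK // ltnS -{2}sum_c.
rewrite (bigID (mem (level c v.+1))) /= -sum1_card.
apply: leq_trans (leq_addr _ _); apply: leq_sum => i; rewrite inE => /eqP ->.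
exact: ltn0Sn.
Qed.

Lemma inLambda_with_profile l c :
  (inLambda k l && (c \in with_profile l)) = admissible k c && (l == profile c).
Proof.
apply/andP/andP => [[/andP[/eqP weight_l /forallP kbar_l] /gradedP[_ cs ck cL]]|].
  have cl : has_profile l c.
    by move=> [|v] // /andP[_ vs]; rewrite -(cL v vs).
  have adm_c : admissible k c.
    by apply/andP; split; [apply/forallP | rewrite -(profile_weight cs cl) weight_l].
  split=> //; apply/eqP/ffunP => j; apply: ord_inj.
  by rewrite -!lamE cl ?(profileP adm_c) ?ltn_ord.
case=> adm_c /eqP ->; have /andP[/forallP ck /eqP sum_c] := adm_c.
have cs i : c i <= s := content_le_s (ck i).
have cl := profileP adm_c.
split; last first.
  by apply/gradedP; split=> // [i|j js]; rewrite ?inE // -cl // js.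
apply/andP; split; first by rewrite (profile_weight cs cl) sum_c.
apply/forallP => j; rewrite (profile_tail cs cl) ?ltn_ord // /kbar.
apply: subset_leq_card; apply/subsetP => i; rewrite !inE => jc.
exact: leq_trans jc (ck i).
Qed.

Lemma card_with_profile l : s <= m ->
  #|with_profile l| =
  \prod_(1 <= j < s.+1) 'C(kbar k j - \sum_(j.+1 <= i < s.+1) lam l i, lam l j).
Proof.
move=> le_sm; rewrite card_graded ?sub0set // cards0.
by apply: eq_bigr => j _; rewrite subn0.
Qed.

Lemma multinomial_profile c : admissible k c ->
  #|content_class m (fun i => c i : nat)| * \prod_(1 <= j < s.+1) (j`! ^ lam (profile c) j)
  = m`!.
Proof.
move=> adm_c; have /andP[/forallP ck /eqP sum_c] := adm_c.
have cs i : c i <= s := content_le_s (ck i).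
by rewrite (profile_fact cs (profileP adm_c)) multinomial_content.
Qed.

End Profiles.

Unset Implicit Arguments.
Local Open Scope ring_scope.

Theorem theorem7p1 (n : nat) (k : 'I_n -> nat) (hk : forall i, (0 < k i)%N)
    (m : nat) :
  let s := minn m (kmax k) in
  (#|mperms k m|)%:R =
  \sum_(l : {ffun 'I_s -> 'I_m.+1} | inLambda k l)
     ((m`!)%:R / (\prod_(1 <= i < s.+1) ((i`!) ^ lam l i)%N%:R) : rat)
     * \prod_(1 <= j < s.+1)
         ('C(kbar k j - \sum_(j.+1 <= i < s.+1) lam l i, lam l j))%:R.
Proof.
move=> s; have le_sm : (s <= m)%N by rewrite geq_minl.
have le_content_s i : (minn m (k i) <= s)%N.
  by rewrite leq_min geq_minl (leq_trans (geq_minr _ _) (leq_bigmax i)).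
pose weight (l : {ffun 'I_s -> 'I_m.+1}) : rat :=
  (m`!)%:R / (\prod_(1 <= i < s.+1) ((i`!) ^ lam l i)%N%:R).
(* Expand each binomial product as a sum over the contents with profile l, ... *)
rewrite (eq_bigr (fun l => \sum_(c in with_profile k l) weight l)) => [|l _]; last first.
  by rewrite -[X in _ * X]natr_prod -card_with_profile // -sum1_card natr_sum mulr_sumr;
     apply: eq_bigr => c _; rewrite mulr1.
(* ... regroup by content: an admissible c is counted once, with its own profile, ... *)
rewrite card_mperms_content natr_sum big_mkcond [RHS](exchange_big_dep xpredT) //=.
apply: eq_bigr => c _; rewrite (eq_bigl _ _ (fun l => inLambda_with_profile le_content_s l c)).
case: ifP => [adm_c|_]; last by rewrite big_pred0 // => l; rewrite andFb.
(* ... and its weight is the multinomial coefficient counting its words. *)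
rewrite (eq_bigl _ _ (fun l => andTb (l == profile s c))) big_pred1_eq /weight.
rewrite -(multinomial_profile le_content_s adm_c) natrM -natr_prod mulfK //.
by rewrite pnatr_eq0 -lt0n prodn_gt0 // => i; rewrite expn_gt0 fact_gt0.
Qed.
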